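(* Let $M$ be a compact manifold, $D\subset M$ open, $B\subset M$ open with $\overline B\subset D$, and let $h_1,h_2,\dots$ be maps each sending $\overline D$ into $D$ and being a contraction of rate $\beta<1$ on $\overline D$. Assume $B\subset\bigcup_{i=1}^\infty h_i(B)$. Then for every $x\in B$ there is a sequence $(i_j)_{j\ge1}$ of positive integers such that $x=\lim_{n\to\infty}h_{i_1}\circ\dots\circ h_{i_n}(y)$ for all $y\in B$. *)

From HB Require Import structures.
From mathcomp Require Import all_boot all_order all_algebra.
From mathcomp Require Import all_classical all_reals all_analysis.
Set Implicit Arguments. Unset Strict Implicit. Unset Printing Implicit Defensive.
Import Order.TTheory GRing.Theory Num.Theory.
Import numFieldNormedType.Exports.
Local Open Scope classical_set_scope.
Local Open Scope ring_scope.

Definition is_metric (R : realType) (M : Type) (d : M -> M -> R) : Prop :=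
  [/\ forall x y, 0 <= d x y,
      forall x y, d x y = 0 <-> x = y,
      forall x y, d x y = d y x &
      forall x y z, d x z <= d x y + d y z].

Definition metric_compatible (R : realType) (M : topologicalType)
  (d : M -> M -> R) : Prop :=
  forall (x : M) (A : set M),
    nbhs x A <-> exists2 e : R, 0 < e & forall y, d x y < e -> A y.

Definition locally_euclidean (R : realType) (M : topologicalType) : Prop :=
  forall x : M, exists (k : nat) (U : set M) (V : set 'rV[R]_k)
    (f : M -> 'rV[R]_k) (g : 'rV[R]_k -> M),
    [/\ open U, U x, open V & f @` U = V] /\
    [/\ (forall u, U u -> g (f u) = u),
         {within U, continuous f} & {within V, continuous g}].

(* iter_comp h s n = h (s 0) \o h (s 1) \o ... \o h (s n.-1) *)
Fixpoint iter_comp (M : Type) (h : nat -> M -> M) (s : nat -> nat) (n : nat)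
  : M -> M :=
  match n with
  | 0 => id
  | n'.+1 => fun y => iter_comp h s n' (h (s n') y)
  end.

From HB Require Import structures.
From mathcomp Require Import all_boot all_order all_algebra.
From mathcomp Require Import all_classical all_reals all_analysis.
Set Implicit Arguments. Unset Strict Implicit. Unset Printing Implicit Defensive.
Import Order.TTheory GRing.Theory Num.Theory.
Import numFieldNormedType.Exports.
Local Open Scope classical_set_scope.
Local Open Scope ring_scope.

(* Covering B by the images h_i(B) lets us walk backwards from x inside B:
   x = h_{s 0}(x_1), x_1 = h_{s 1}(x_2), ..., so the n-fold composition sends
   x_n to x.  Every other point y of B is sent within beta^n d(y, x_n) of x,
   and d(y, x_n) is bounded by the diameter of the compact space M. *)

Lemma compact_metric_bounded (R : realType) (M : topologicalType)
  (d : M -> M -> R) : is_metric d -> metric_compatible d ->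
  compact [set: M] -> exists C : R, forall y z, d y z <= C.
Proof.
move=> [_ _ dsym dtri] hcompat hcpt.
have [[x0 _]|noM] := pselect (exists x0 : M, True); last first.
  by exists 0 => y; case: noM; exists y.
pose m z := (Num.truncn (d x0 z + 1)).+1.
have near_ball z : [set: M] z ->
    \forall x' \near z & n \near \oo, d x0 x' < n%:R.
  move=> _; exists ([set x' | d z x' < 1], [set n | m z <= n]%N).
    by split => /=; [apply/hcompat; exists 1 | exists (m z)].
  case=> x' n /= [zx' mn]; apply: le_lt_trans (dtri _ z _) _.
  apply: (@lt_le_trans _ _ (m z)%:R); last by rewrite ler_nat.
  by apply: lt_trans (truncnS_gt _); rewrite ltrD2l.
have [N _ HN] := proj1 (compact_near_coveringP [set: M]) hcpt nat \oo _ _ near_ball.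
exists (N%:R *+ 2) => y z; apply: le_trans (dtri y x0 z) _.
by rewrite mulr2n dsym lerD // ltW // (HN N (leqnn N) _ I).
Qed.

Lemma metric_cvg_to (R : realType) (M : topologicalType) (d : M -> M -> R)
  (u : nat -> M) (x : M) (e : nat -> R) : metric_compatible d ->
  e n @[n --> \oo] --> 0 -> (forall n, d x (u n) <= e n) ->
  u n @[n --> \oo] --> x.
Proof.
move=> hcompat e0 ue A /hcompat [r r0 Ar].
suff : \forall n \near \oo, A (u n) by [].
by near do apply/Ar/(le_lt_trans (ue _)); exact: (cvgr_lt 0 e0).
Unshelve. all: end_near.
Qed.

Lemma backward_orbit (T : Type) (B : set T) (f : nat -> T -> T)
  (x : T) : B `<=` \bigcup_i (f i @` B) -> B x ->
  exists (s : nat -> nat) (p : nat -> T),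
    [/\ p 0 = x, forall n, B (p n) & forall n, f (s n) (p n.+1) = p n].
Proof.
move=> hcov Bx.
have [g gP] : {g : T -> nat * T &
    forall z, B z -> B (g z).2 /\ f (g z).1 (g z).2 = z}.
  apply: (@choice _ _ (fun z q => B z -> B q.2 /\ f q.1 q.2 = z)) => z.
  have [Bz|nBz] := pselect (B z); last by exists (0, x).
  by have [i _ [w Bw <-]] := hcov z Bz; exists (i, w).
pose p n := iter n (fun z => (g z).2) x.
have Bp n : B (p n) by elim: n => // n IH; exact: (gP _ IH).1.
by exists (fun n => (g (p n)).1), p; split=> // n; exact: (gP _ (Bp n)).2.
Qed.

Lemma iter_comp_backward_orbit (T : Type) (f : nat -> T -> T)
  (s : nat -> nat) (p : nat -> T) :
  (forall n, f (s n) (p n.+1) = p n) -> forall n, iter_comp f s n (p n) = p 0.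
Proof. by move=> fp; elim=> //= n <-; rewrite fp. Qed.

Section ContractingCompositions.
Variables (R : realType) (M : Type) (d : M -> M -> R) (K : set M).
Variables (h : nat -> M -> M) (b : R).
Hypothesis b_ge0 : 0 <= b.
Hypothesis hK : forall i, h i @` K `<=` K.
Hypothesis hcontr : forall i y z, K y -> K z -> d (h i y) (h i z) <= b * d y z.

Lemma h_stable i y : K y -> K (h i y).
Proof. by move=> Ky; exact: hK (imageP _ Ky). Qed.

Lemma iter_comp_contract s n y z : K y -> K z ->
  d (iter_comp h s n y) (iter_comp h s n z) <= b ^+ n * d y z.
Proof.
elim: n y z => [|n IH] y z Ky Kz /=; first by rewrite mul1r.
apply: le_trans (IH _ _ (h_stable _ Ky) (h_stable _ Kz)) _.
by rewrite exprSr -mulrA ler_wpM2l ?exprn_ge0 // hcontr.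
Qed.

End ContractingCompositions.

Theorem lemma3p7 (R : realType) (M : topologicalType) (d : M -> M -> R)
  (hd : is_metric d) (hcompat : metric_compatible d)
  (hman : locally_euclidean R M) (hcpt : compact [set: M])
  (D B : set M) (hD : open D) (hB : open B) (hBD : closure B `<=` D)
  (h : nat -> M -> M) (beta : R) (hbeta : beta < 1)
  (hmaps : forall i, h i @` closure D `<=` D)
  (hcontr : forall i x y, closure D x -> closure D y ->
              d (h i x) (h i y) <= beta * d x y)
  (hcov : B `<=` \bigcup_i (h i @` B)) :
  forall x, B x -> exists s : nat -> nat,
    forall y, B y -> iter_comp h s n y @[n --> \oo] --> x.
Proof.
move=> x Bx; case: (hd) => d_ge0 _ dsym _.
pose b := Num.max beta 0.
have b_ge0 : 0 <= b by rewrite le_max lexx orbT.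
have b_lt1 : `|b| < 1 by rewrite ger0_norm // gt_max hbeta ltr01.
have hKD i : h i @` closure D `<=` closure D.
  by move=> z /(hmaps i) Dz; exact: subset_closure.
have hbcontr i y z : closure D y -> closure D z -> d (h i y) (h i z) <= b * d y z.
  by move=> Dy Dz; apply: le_trans (hcontr i y z Dy Dz) _; rewrite ler_wpM2r ?le_max ?lexx.
have BD y : B y -> closure D y by move=> By; exact/subset_closure/hBD/subset_closure.
have [C HC] := compact_metric_bounded hd hcompat hcpt.
have [s [p [p0 Bp orbit]]] := backward_orbit hcov Bx.
exists s => y By; apply: (metric_cvg_to (e := fun n => b ^+ n * C)) => //.
  by rewrite -(mul0r C); apply: cvgM; [exact: cvg_expr | exact: cvg_cst].
move=> n; rewrite -p0 -(iter_comp_backward_orbit orbit n) dsym.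
apply: le_trans (iter_comp_contract b_ge0 hKD hbcontr _ _ (BD _ By) (BD _ (Bp n))) _.
by rewrite ler_wpM2l ?exprn_ge0.
Qed.
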